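(* Let $(F_S,\iota)$ be an embedded local étale algebra and $\Gamma\subseteq\mathrm{PGL}_2(F_S)$ a discrete subgroup. Then \[ \mathcal L^S_\Gamma\subseteq\bigcup_{\mathfrak p\in S}\Big(\mathbb P^1(F_\mathfrak p)\times\prod_{\mathfrak q\in S\setminus\{\mathfrak p\}}\mathbb P^1(\mathbf C)\Big), \] i.e. every limit point has at least one coordinate $x_\mathfrak p$ lying in $\mathbb P^1(F_\mathfrak p)$.
   Context: Fix a prime $p$ and let $\mathbf{C}$ be the completion of an algebraic closure of $\mathbb{Q}_p$ or of $\mathbb{F}_p((T))$. An embedded local étale algebra $(F_S,\iota)$ consists of a finite non-empty set $S$, non-Archimedean local fields $F_\mathfrak p$ ($\mathfrak p\in S$) of residue characteristic $p$ and the same characteristic as $\mathbf C$, and embeddings $\iota_\mathfrak p\colon F_\mathfrak p\hookrightarrow\mathbf C$, through which $\mathbb P^1(F_\mathfrak p)\subseteq\mathbb P^1(\mathbf C)$. $\mathrm{PGL}_2(F_S)=\prod_\mathfrak p\mathrm{PGL}_2(F_\mathfrak p)$ (with its locally compact topology) acts componentwise by Möbius transformations on $\mathbb P^1(\mathbf C_S)=\prod_{\mathfrak p\in S}\mathbb P^1(\mathbf C)$. For a subgroup $\Gamma$, $\mathcal L^S_\Gamma$ is the set of $x\in\mathbb P^1(\mathbf C_S)$ such that $\gamma_j(y)\to x$ for some $y$ and pairwise distinct $\gamma_j\in\Gamma$. *)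

From HB Require Import structures.
From mathcomp Require Import all_boot all_order all_algebra.
From mathcomp Require Import reals.

Set Implicit Arguments.
Unset Strict Implicit.
Unset Printing Implicit Defensive.

Import Order.TTheory GRing.Theory Num.Theory.
Local Open Scope ring_scope.

Section Defs.
Variables (R : realType) (C : closedFieldType) (abs : C -> R).

Definition nonarch_abs : Prop :=
  (forall x, 0 <= abs x) /\ (forall x, abs x = 0 <-> x = 0) /\
  (forall x y, abs (x * y) = abs x * abs y) /\
  (forall x y, abs (x + y) <= Num.max (abs x) (abs y)).

Definition seq_cvg (u : nat -> C) (l : C) : Prop :=
  forall eps : R, 0 < eps -> exists N, forall n, (N <= n)%N -> abs (u n - l) < eps.

Definition abs_complete : Prop :=
  forall u : nat -> C,
    (forall eps : R, 0 < eps -> exists N, forall m n, (N <= m)%N -> (N <= n)%N ->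
        abs (u m - u n) < eps) ->
    exists l, seq_cvg u l.

Definition abs_dense (P : C -> Prop) : Prop :=
  forall x (eps : R), 0 < eps -> exists y, P y /\ abs (x - y) < eps.

Definition algebraic_over (A : C -> Prop) (y : C) : Prop :=
  exists P : {poly C}, P != 0 /\ root P y /\ forall i, A P`_i.

(** (C, abs) is (isometric, up to scaling of the absolute value, to) the
    completion of an algebraic closure of Q_p (first case: char 0, |p|<1,
    algebraic numbers dense) or of F_p((T)) (second case: char p, an element
    t with 0<|t|<1, and elements algebraic over F_p(t) dense). C is
    algebraically closed by its type. *)
Definition is_C_field (p : nat) : Prop :=
  prime p /\ nonarch_abs /\ abs_complete /\
  ( ([pchar C] =i pred0 /\ abs (p%:R) < 1 /\
      abs_dense (algebraic_over (fun c => exists z : int, c = z%:~R)))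
  \/ (p \in [pchar C] /\ exists t : C, 0 < abs t < 1 /\
      abs_dense (algebraic_over
         (fun c => exists f : {poly int}, c = (map_poly (fun z : int => z%:~R) f).[t])))).

Definition is_subfield (K : C -> Prop) : Prop :=
  K 0 /\ K 1 /\ (forall x y, K x -> K y -> K (x - y) /\ K (x * y)) /\
  (forall x, K x -> K x^-1).

(** K is the image of a (continuous) embedding of a non-Archimedean local
    field: a non-discrete subfield of C whose closed unit ball is
    (sequentially) compact for the induced topology. *)
Definition embedded_local_field (K : C -> Prop) : Prop :=
  is_subfield K /\ (exists x, K x /\ 0 < abs x < 1) /\
  (forall u : nat -> C, (forall n, K (u n) /\ abs (u n) <= 1) ->
     exists (phi : nat -> nat) (l : C),
       (forall m n, (m < n)%N -> (phi m < phi n)%N) /\ K l /\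
       seq_cvg (fun n => u (phi n)) l).

Definition i0 : 'I_2 := @ord0 1.
Definition i1 : 'I_2 := @ord_max 1.

(** Chordal distance on P^1(C), points given by nonzero column vectors. *)
Definition chordal (u v : 'cV[C]_2) : R :=
  abs (u i0 ord0 * v i1 ord0 - u i1 ord0 * v i0 ord0) /
  (Num.max (abs (u i0 ord0)) (abs (u i1 ord0)) *
   Num.max (abs (v i0 ord0)) (abs (v i1 ord0))).

Variable S : finType.

(** Equality in PGL_2(F_S) of two families of matrices. *)
Definition proj_eq (g h : S -> 'M[C]_2) : Prop :=
  forall s, exists c : C, c != 0 /\ g s = c *: h s.

(** G is the (full) preimage in prod_s GL_2(K s) of a subgroup of
    PGL_2(F_S) = prod_s PGL_2(K s). *)
Definition pgl_subgroup (K : S -> C -> Prop) (G : (S -> 'M[C]_2) -> Prop) : Prop :=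
  (forall g, G g -> forall s, (forall i j, K s (g s i j)) /\ \det (g s) != 0) /\
  G (fun _ => 1%:M) /\
  (forall g h, G g -> G h -> G (fun s => g s *m h s)) /\
  (forall g, G g -> G (fun s => invmx (g s))) /\
  (forall g (c : S -> C), G g -> (forall s, K s (c s) /\ c s != 0) ->
      G (fun s => c s *: g s)).

Definition pgl_discrete (G : (S -> 'M[C]_2) -> Prop) : Prop :=
  exists eps : R, 0 < eps /\
    forall g, G g -> (forall s i j, abs (g s i j - (1%:M : 'M[C]_2) i j) < eps) ->
      proj_eq g (fun _ => 1%:M).

Definition limit_point (G : (S -> 'M[C]_2) -> Prop) (x : S -> 'cV[C]_2) : Prop :=
  (forall s, x s != 0) /\
  exists (y : S -> 'cV[C]_2) (gam : nat -> S -> 'M[C]_2),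
    (forall s, y s != 0) /\ (forall j, G (gam j)) /\
    (forall i j, i <> j -> ~ proj_eq (gam i) (gam j)) /\
    forall s (eps : R), 0 < eps -> exists N, forall j, (N <= j)%N ->
      chordal (gam j s *m y s) (x s) < eps.

End Defs.

Definition in_P1 (C : fieldType) (K : C -> Prop) (v : 'cV[C]_2) : Prop :=
  exists w : 'cV[C]_2, w != 0 /\ (forall i, K (w i ord0)) /\ exists c : C, v = c *: w.

From HB Require Import structures.
From mathcomp Require Import all_boot all_order all_algebra.
From mathcomp Require Import reals.
From mathcomp Require Import ring lra.
From Stdlib Require Import IndefiniteDescription.
Import Order.TTheory GRing.Theory Num.Theory.
Local Open Scope ring_scope.
Set Implicit Arguments.
Unset Strict Implicit.
Unset Printing Implicit Defensive.

(* Let gam_j y -> x with the gam_j pairwise distinct in Gamma.  Rescale each component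
   of gam_j by a scalar of F_p so that its largest entry has absolute value 1; by
   compactness of the unit balls a subsequence converges componentwise to some nonzero h.
   If every h_p were invertible, gam_j gam_(j+1)^-1 would tend to the identity of
   PGL_2(F_S), contradicting discreteness.  So some h_p is singular: a rank-one matrix with
   entries in F_p.  If h_p y_p <> 0, then x_p is on the line through h_p y_p, which is
   spanned by a column of h_p.  Otherwise y_p is F_p-rational, hence so are the points
   gam_j y_p, and P^1(F_p) is closed in P^1(C). *)

Definition eventually (P : nat -> Prop) := exists N, forall n, (N <= n)%N -> P n.

Lemma eventually_and (P Q : nat -> Prop) :
  eventually P -> eventually Q -> eventually (fun n => P n /\ Q n).
Proof.
move=> [M hP] [N hQ]; exists (maxn M N) => n; rewrite geq_max => /andP[hM hN].
by split; [apply: hP | apply: hQ].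
Qed.

Lemma eventually_all (I : finType) (P : I -> nat -> Prop) :
  (forall i, eventually (P i)) -> eventually (fun n => forall i, P i n).
Proof.
move=> hP; suff [N hN] : eventually (fun n => forall i, i \in enum I -> P i n).
  by exists N => n /hN hn i; apply: hn; rewrite mem_enum.
elim: (enum I) => [|a r IH]; first by exists 0%N.
have [N hN] := eventually_and (hP a) IH.
by exists N => n /hN[ha hr] i; rewrite inE => /orP[/eqP->|/hr].
Qed.

Lemma homo_ltn_self_leq (phi : nat -> nat) :
  {homo phi : m n / (m < n)%N} -> forall n, (n <= phi n)%N.
Proof. by move=> hphi; elim=> [//|n IH]; apply: leq_ltn_trans IH (hphi _ _ _). Qed.

Lemma eventually_subseq (P : nat -> Prop) (phi : nat -> nat) :
  {homo phi : m n / (m < n)%N} -> eventually P -> eventually (fun n => P (phi n)).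
Proof.
move=> hphi [N hN]; exists N => n hn; apply: hN.
exact: leq_trans hn (homo_ltn_self_leq hphi n).
Qed.

Section Plane.
Variable C : fieldType.

Lemma ord2P (i : 'I_2) : i = i0 \/ i = i1.
Proof. by case: i => [[|[|//]]] ?; [left|right]; apply: val_inj. Qed.

Lemma mulmx2E m n (A : 'M[C]_(m, 2)) (B : 'M[C]_(2, n)) i k :
  (A *m B) i k = A i i0 * B i0 k + A i i1 * B i1 k.
Proof.
have lift_i1 : lift ord0 ord0 = i1 :> 'I_2 by apply: val_inj.
by rewrite mxE !big_ord_recl big_ord0 addr0 lift_i1.
Qed.

Lemma det_mx2 (A : 'M[C]_2) : \det A = A i0 i0 * A i1 i1 - A i0 i1 * A i1 i0.
Proof.
rewrite (expand_det_row _ i0) !big_ord_recl big_ord0 /cofactor !det_mx11 !mxE /=.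
have -> : lift i0 ord0 = i1 by apply: val_inj.
have -> : lift i1 ord0 = i0 by apply: val_inj.
by rewrite expr0 expr1; ring.
Qed.

Lemma cV2P (u v : 'cV[C]_2) : u i0 0 = v i0 0 -> u i1 0 = v i1 0 -> u = v.
Proof. by move=> h0 h1; apply/matrixP => i j; rewrite (ord1 j); case: (ord2P i) => ->. Qed.

Definition wedge (u v : 'cV[C]_2) := u i0 0 * v i1 0 - u i1 0 * v i0 0.

Lemma wedge_eq0_scale (w v : 'cV[C]_2) : w != 0 -> wedge w v = 0 -> exists c, v = c *: w.
Proof.
rewrite /wedge => /matrix0Pn[i [j]]; rewrite (ord1 j) => nwi /eqP; rewrite subr_eq0 => /eqP e.
exists (v i 0 / w i 0); apply: cV2P; rewrite !mxE; case: (ord2P i) nwi => -> nwi.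
- by rewrite divfK.
- by apply: (mulfI nwi); rewrite -e; field.
- by apply: (mulfI nwi); rewrite e; field.
- by rewrite divfK.
Qed.

Lemma wedge_col_mul k (A : 'M[C]_2) v :
  wedge (col k A) (A *m v) = (if k == i0 then v i1 0 else - v i0 0) * \det A.
Proof.
by rewrite /wedge !mulmx2E det_mx2 !mxE; case: (ord2P k) => ->; rewrite /=; ring.
Qed.

Lemma singular_mul_col (A : 'M[C]_2) v k :
  \det A = 0 -> col k A != 0 -> exists c, A *m v = c *: col k A.
Proof. by move=> dA nAk; apply: wedge_eq0_scale => //; rewrite wedge_col_mul dA mulr0. Qed.

Definition row_kernel_vector (A : 'M[C]_2) i : 'cV[C]_2 :=
  \col_j (if j == i0 then - A i i1 else A i i0).

Lemma wedge_row_kernel_vector (A : 'M[C]_2) i v :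
  wedge (row_kernel_vector A i) v = - (A *m v) i 0.
Proof. by rewrite /wedge mulmx2E !mxE /=; ring. Qed.

Lemma row_kernel_vector_neq0 (A : 'M[C]_2) i k : A i k != 0 -> row_kernel_vector A i != 0.
Proof.
move=> nAik; apply/matrix0Pn; case: (ord2P k) nAik => -> nAik.
  by exists i1, 0; rewrite mxE.
by exists i0, 0; rewrite mxE oppr_eq0.
Qed.

Lemma mul_eq0_scale_kernel (A : 'M[C]_2) v i k :
  A i k != 0 -> A *m v = 0 -> exists c, v = c *: row_kernel_vector A i.
Proof.
move=> nAik Av0; apply: wedge_eq0_scale; first exact: row_kernel_vector_neq0 nAik.
by rewrite wedge_row_kernel_vector Av0 mxE oppr0.
Qed.

End Plane.

Section Subfield.
Variables (C : closedFieldType) (K : C -> Prop).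
Hypothesis hK : is_subfield K.

Lemma subfield0 : K 0. Proof. by case: hK. Qed.
Lemma subfieldB x y : K x -> K y -> K (x - y).
Proof. by case: hK => _ [_ [hBM _]] /hBM hx /hx[]. Qed.
Lemma subfieldM x y : K x -> K y -> K (x * y).
Proof. by case: hK => _ [_ [hBM _]] /hBM hx /hx[]. Qed.
Lemma subfieldV x : K x -> K x^-1. Proof. by case: hK => _ [_ [_ hV]] /hV. Qed.
Lemma subfieldN x : K x -> K (- x).
Proof. by rewrite -sub0r; apply: subfieldB subfield0. Qed.
Lemma subfieldD x y : K x -> K y -> K (x + y).
Proof. by move=> hx /subfieldN; rewrite -{2}(opprK y); apply: subfieldB. Qed.

Definition mx_over m n (A : 'M[C]_(m, n)) := forall i j, K (A i j).

Lemma mx_over_mul m n p (A : 'M[C]_(m, n)) (B : 'M[C]_(n, p)) :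
  mx_over A -> mx_over B -> mx_over (A *m B).
Proof.
move=> hA hB i j; rewrite mxE; apply: (big_ind K subfield0 subfieldD) => l _.
exact: subfieldM.
Qed.

End Subfield.

Lemma proj_eq_scale (C : closedFieldType) (S : finType) (a b : S -> C) (g h : S -> 'M[C]_2) :
  (forall s, a s != 0) -> (forall s, b s != 0) ->
  proj_eq (fun s => a s *: g s) (fun s => b s *: h s) -> proj_eq g h.
Proof.
move=> na nb gh s; have [d [nd e]] := gh s.
exists ((a s)^-1 * d * b s); split; first by rewrite !mulf_neq0 ?invr_eq0.
by rewrite -!scalerA -e scalerA mulVf ?scale1r.
Qed.

Section Ultrametric.
Variables (R : realType) (C : closedFieldType) (abs : C -> R).
Hypothesis hAbs : nonarch_abs abs.

Lemma abs_ge0 x : 0 <= abs x. Proof. by case: hAbs. Qed.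
Lemma abs_eq0 x : abs x = 0 <-> x = 0. Proof. by case: hAbs => _ []. Qed.
Lemma absM x y : abs (x * y) = abs x * abs y. Proof. by case: hAbs => _ [_ []]. Qed.
Lemma absD_max x y : abs (x + y) <= Num.max (abs x) (abs y).
Proof. by case: hAbs => _ [_ []]. Qed.

Lemma abs0 : abs 0 = 0. Proof. exact/abs_eq0. Qed.

Lemma abs_gt0 x : x != 0 -> 0 < abs x.
Proof. by move=> nx; rewrite lt_def abs_ge0 andbT; apply: contra_neq nx => /abs_eq0. Qed.

Lemma abs1 : abs 1 = 1.
Proof.
have n1 : abs 1 != 0 by rewrite gt_eqF // abs_gt0 ?oner_eq0.
by apply: (mulfI n1); rewrite -absM !mulr1.
Qed.

Lemma absN x : abs (- x) = abs x.
Proof.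
have h : abs (-1) * abs (-1) = 1 by rewrite -absM mulrNN mulr1 abs1.
have h0 := abs_ge0 (-1); have e1 : abs (-1) = 1 by nra.
by rewrite -mulN1r absM e1 mul1r.
Qed.

Lemma absV x : abs x^-1 = (abs x)^-1.
Proof.
have [->|nx] := eqVneq x 0; first by rewrite invr0 abs0 invr0.
have nax : abs x != 0 by rewrite gt_eqF // abs_gt0.
by apply: (mulfI nax); rewrite -absM !divff // abs1.
Qed.

Lemma absD_lt x y e : abs x < e -> abs y < e -> abs (x + y) < e.
Proof. by move=> hx hy; apply: le_lt_trans (absD_max x y) _; rewrite gt_max hx hy. Qed.

Lemma abs_eq_near x a : abs (x - a) < abs a -> abs x = abs a.
Proof.
move=> h; have := absD_max (x - a) a; rewrite subrK (max_idPr (ltW h)) => le_xa.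
apply/eqP; rewrite eq_le le_xa /=.
have := absD_max (x - a) (- x); rewrite addrC addKr !absN le_max => /orP[|//].
by rewrite leNgt h.
Qed.

Notation cvg := (seq_cvg abs).

Lemma cvg_eq u v l : (forall n, u n = v n) -> cvg v l -> cvg u l.
Proof. by move=> e hv eps /hv [N hN]; exists N => n /hN; rewrite e. Qed.

Lemma cvg_cst a : cvg (fun _ => a) a.
Proof. by move=> eps he; exists 0%N => n _; rewrite subrr abs0. Qed.

Lemma cvg_subseq u l phi :
  {homo phi : m n / (m < n)%N} -> cvg u l -> cvg (fun n => u (phi n)) l.
Proof. by move=> hphi hu eps /hu; apply: eventually_subseq. Qed.

Lemma cvgN u a : cvg u a -> cvg (fun n => - u n) (- a).
Proof. by move=> hu eps /hu [N hN]; exists N => n /hN; rewrite -opprD absN. Qed.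

Lemma cvgD u v a b : cvg u a -> cvg v b -> cvg (fun n => u n + v n) (a + b).
Proof.
move=> hu hv eps he; have [N hN] := eventually_and (hu eps he) (hv eps he).
exists N => n /hN[ha hb].
have -> : u n + v n - (a + b) = (u n - a) + (v n - b) by ring.
exact: absD_lt.
Qed.

Lemma cvgB u v a b : cvg u a -> cvg v b -> cvg (fun n => u n - v n) (a - b).
Proof. by move=> hu /cvgN; apply: cvgD. Qed.

Lemma cvgM u v a b : cvg u a -> cvg v b -> cvg (fun n => u n * v n) (a * b).
Proof.
move=> hu hv eps he.
have hA := abs_ge0 a; have hB := abs_ge0 b.
set d := Num.min 1 (eps / (1 + abs a + abs b)).
have hd : 0 < d by rewrite lt_min ltr01 divr_gt0 //; lra.
have hd1 : d <= 1 by rewrite ge_min lexx.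
have hde : d * (1 + abs a + abs b) <= eps.
  by rewrite -ler_pdivlMr ?ge_min ?lexx ?orbT //; lra.
have [N hN] := eventually_and (hu d hd) (hv d hd).
exists N => n /hN[ha hb].
have -> : u n * v n - a * b = (u n - a) * (v n - b) + (a * (v n - b) + (u n - a) * b).
  by ring.
have := abs_ge0 (u n - a); have := abs_ge0 (v n - b) => h1 h2.
by rewrite !(absD_lt, absM) //; nra.
Qed.

Lemma cvgV u a : a != 0 -> cvg u a -> cvg (fun n => (u n)^-1) a^-1.
Proof.
move=> na hu eps he; have hA := abs_gt0 na.
set d := Num.min (abs a) (eps * abs a * abs a).
have hd : 0 < d by rewrite lt_min hA !mulr_gt0.
have [N hN] := hu d hd; exists N => n /hN; rewrite lt_min => /andP[near_a small].
have un_a := abs_eq_near near_a.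
have nun : u n != 0 by apply: contra_eq_neq un_a => ->; rewrite abs0 lt_eqF.
have -> : (u n)^-1 - a^-1 = - ((u n)^-1 * a^-1 * (u n - a)) by field; rewrite nun na.
rewrite absN !absM !absV un_a.
by rewrite -invfM mulrC ltr_pdivrMr ?mulr_gt0 // mulrA.
Qed.

Lemma cvg_unique u a b : cvg u a -> cvg u b -> a = b.
Proof.
move=> ha hb; apply/eqP/negPn/negP => nab.
have he : 0 < abs (a - b) by rewrite abs_gt0 // subr_eq0.
have [N hN] := eventually_and (ha _ he) (hb _ he).
have [hNa hNb] := hN N (leqnn N).
rewrite -absN in hNa; have := absD_lt hNa hNb.
by rewrite opprB addrA subrK ltxx.
Qed.

Lemma cvg_sum (I : Type) (r : seq I) (P : pred I) (F : nat -> I -> C) (L : I -> C) :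
  (forall i, cvg (F^~ i) (L i)) ->
  cvg (fun n => \sum_(i <- r | P i) F n i) (\sum_(i <- r | P i) L i).
Proof.
move=> hF; elim: r => [|i r IH].
  by rewrite big_nil; apply: cvg_eq (cvg_cst 0) => n; rewrite big_nil.
rewrite big_cons; case: ifP => Pi.
  by apply: cvg_eq (cvgD (hF i) IH) => n; rewrite big_cons Pi.
by apply: cvg_eq IH => n; rewrite big_cons Pi.
Qed.

Lemma cvg_prod (I : Type) (r : seq I) (P : pred I) (F : nat -> I -> C) (L : I -> C) :
  (forall i, cvg (F^~ i) (L i)) ->
  cvg (fun n => \prod_(i <- r | P i) F n i) (\prod_(i <- r | P i) L i).
Proof.
move=> hF; elim: r => [|i r IH].
  by rewrite big_nil; apply: cvg_eq (cvg_cst 1) => n; rewrite big_nil.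
rewrite big_cons; case: ifP => Pi.
  by apply: cvg_eq (cvgM (hF i) IH) => n; rewrite big_cons Pi.
by apply: cvg_eq IH => n; rewrite big_cons Pi.
Qed.

Definition mxcvg m n (A : nat -> 'M[C]_(m, n)) (L : 'M_(m, n)) :=
  forall i j, cvg (fun k => A k i j) (L i j).

Lemma mxcvg_cst m n (A : 'M[C]_(m, n)) : mxcvg (fun _ => A) A.
Proof. by move=> i j; apply: cvg_cst. Qed.

Lemma mxcvg_subseq m n (A : nat -> 'M[C]_(m, n)) L phi :
  {homo phi : x y / (x < y)%N} -> mxcvg A L -> mxcvg (fun k => A (phi k)) L.
Proof. by move=> hphi hA i j; apply: (cvg_subseq (u := fun k => A k i j)). Qed.

Lemma mxcvgZ m n (c : nat -> C) (A : nat -> 'M[C]_(m, n)) l L :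
  cvg c l -> mxcvg A L -> mxcvg (fun k => c k *: A k) (l *: L).
Proof.
by move=> hc hA i j; rewrite mxE; apply: cvg_eq (cvgM hc (hA i j)) => k; rewrite mxE.
Qed.

Lemma mxcvg_mul m n p (A : nat -> 'M[C]_(m, n)) (B : nat -> 'M[C]_(n, p)) L1 L2 :
  mxcvg A L1 -> mxcvg B L2 -> mxcvg (fun k => A k *m B k) (L1 *m L2).
Proof.
move=> hA hB i j; rewrite mxE.
have := cvg_sum (index_enum 'I_n) xpredT (fun l => cvgM (hA i l) (hB l j)).
by apply: cvg_eq => k; rewrite mxE.
Qed.

Lemma mxcvg_det n (A : nat -> 'M[C]_n) L : mxcvg A L -> cvg (fun k => \det (A k)) (\det L).
Proof.
move=> hA; apply: cvg_sum => s; apply: cvgM (cvg_cst _) _.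
by apply: cvg_prod => i; apply: hA.
Qed.

Lemma mxcvg_adj n (A : nat -> 'M[C]_n) L : mxcvg A L -> mxcvg (fun k => \adj (A k)) (\adj L).
Proof.
move=> hA i j; rewrite mxE; apply: cvg_eq => [k|]; first by rewrite mxE.
apply: cvgM (cvg_cst _) (mxcvg_det _) => a b; rewrite !mxE.
by apply: cvg_eq (hA _ _) => k; rewrite !mxE.
Qed.

Lemma mxcvg_invmx n (A : nat -> 'M[C]_n) L :
  (forall k, A k \in unitmx) -> L \in unitmx -> mxcvg A L ->
  mxcvg (fun k => invmx (A k)) (invmx L).
Proof.
move=> uA uL hA; rewrite {2}/invmx uL => i j.
have ndL : \det L != 0 by rewrite -unitfE.
have := mxcvgZ (cvgV ndL (mxcvg_det hA)) (mxcvg_adj hA) i j.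
by apply: cvg_eq => k; rewrite /invmx uA.
Qed.

Lemma mx_normalize (K : C -> Prop) m n (A : 'M[C]_(m, n)) :
  is_subfield K -> mx_over K A -> A != 0 ->
  exists c, [/\ K c, c != 0, forall i j, abs ((c *: A) i j) <= 1
            & exists i j, abs ((c *: A) i j) = 1].
Proof.
move=> hK hA /matrix0Pn[i0 [j0 nA0]].
have [[i j] _ Amax] := @arg_maxP _ R _ (i0, j0) xpredT (fun q => abs (A q.1 q.2)) isT.
have nAij : A i j != 0.
  apply: contraTneq (Amax (i0, j0) isT) => /= ->.
  by rewrite abs0 // -ltNge abs_gt0.
exists (A i j)^-1; split; [exact: subfieldV | by rewrite invr_eq0 | move=> a b |].
  rewrite mxE absM // absV // mulrC ler_pdivrMr ?mul1r ?abs_gt0 //.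
  exact: (Amax (a, b)).
by exists i, j; rewrite mxE mulVf // abs1.
Qed.

Lemma subseq_cvg_family (I : finType) (K : I -> C -> Prop) (u : nat -> I -> C) :
  (forall i, embedded_local_field abs (K i)) ->
  (forall k i, K i (u k i) /\ abs (u k i) <= 1) ->
  exists (phi : nat -> nat) (l : I -> C), {homo phi : x y / (x < y)%N} /\
    forall i, K i (l i) /\ cvg (fun k => u (phi k) i) (l i).
Proof.
move=> hK hu.
suff [phi [l [hphi hl]]] : exists (phi : nat -> nat) (l : I -> C),
    {homo phi : x y / (x < y)%N} /\
    forall i, i \in enum I -> K i (l i) /\ cvg (fun k => u (phi k) i) (l i).
  by exists phi, l; split=> // i; apply: hl; rewrite mem_enum.
elim: (enum I) => [|a r [phi [l [hphi hl]]]]; first by exists id, (fun=> 0); split.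
have [_ [_ compact_a]] := hK a.
have [psi [la [hpsi [Kla cvg_a]]]] := compact_a (fun k => u (phi k) a) (fun k => hu _ a).
exists (phi \o psi), (fun i => if i == a then la else l i); split.
  by move=> x y /hpsi /hphi.
move=> i; rewrite inE; case: eqP => [-> //|_ /= /hl[Kli cvg_i]]; split=> //.
exact: (cvg_subseq (u := fun k => u (phi k) i)).
Qed.

Lemma proj_subseq_cvg (J : finType) (K : J -> C -> Prop) m n
    (A : nat -> J -> 'M[C]_(m, n)) :
  (forall j, embedded_local_field abs (K j)) ->
  (forall k j, mx_over (K j) (A k j)) -> (forall k j, A k j != 0) ->
  exists (c : nat -> J -> C) (phi : nat -> nat) (L : J -> 'M[C]_(m, n)),
    [/\ {homo phi : x y / (x < y)%N}, forall k j, K j (c k j) /\ c k j != 0,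
        forall j, mx_over (K j) (L j) /\ L j != 0
      & forall j, mxcvg (fun k => c (phi k) j *: A (phi k) j) (L j)].
Proof.
move=> hK hA nA.
have /functional_choice[c hc] : forall kj : nat * J, exists c,
    [/\ K kj.2 c, c != 0, forall i j, abs ((c *: A kj.1 kj.2) i j) <= 1
     & exists i j, abs ((c *: A kj.1 kj.2) i j) = 1].
  by move=> [k j]; apply: mx_normalize; [case: (hK j) | apply: hA | apply: nA].
pose B k j := c (k, j) *: A k j.
have hB : forall k (q : J * 'I_m * 'I_n),
    K q.1.1 (B k q.1.1 q.1.2 q.2) /\ abs (B k q.1.1 q.1.2 q.2) <= 1.
  move=> k [[j a] b]; have [Kc _ B1 _] := hc (k, j); split=> //.
  by rewrite mxE; apply: subfieldM; [case: (hK j) | | apply: hA].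
have [phi [l [hphi hl]]] := subseq_cvg_family (fun q => hK q.1.1) hB.
pose L j := \matrix_(a, b) l (j, a, b).
exists (fun k j => c (k, j)), phi, L; split=> // [k j|j|j a b].
- by have [] := hc (k, j).
- split=> [a b|]; first by rewrite mxE; have [] := hl (j, a, b).
  apply/eqP => Lj0.
  have /eventually_all[N hN] : forall a, eventually (fun k =>
      forall b, abs (B (phi k) j a b - L j a b) < 1).
    move=> a; apply: eventually_all => b; rewrite mxE.
    by have [_ cvg_ab] := hl (j, a, b); apply: cvg_ab ltr01.
  have [_ _ _ [a [b Bab]]] := hc (phi N, j).
  move: Bab; rewrite /= mxE => Bab.
  by have := hN N (leqnn N) a b; rewrite Lj0 !mxE subr0 Bab ltxx.
- by rewrite mxE; have [] := hl (j, a, b).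
Qed.

Definition supnorm (u : 'cV[C]_2) := Num.max (abs (u i0 0)) (abs (u i1 0)).

Lemma supnorm_ge0 u : 0 <= supnorm u.
Proof. by rewrite le_max abs_ge0. Qed.

Lemma supnorm_eq0 u : supnorm u = 0 -> u = 0.
Proof.
move=> u0; have abs_le0 i : abs (u i 0) <= 0.
  by rewrite -u0 le_max; case: (ord2P i) => ->; rewrite lexx ?orbT.
apply/matrixP => i j; rewrite (ord1 j) mxE.
by apply/(abs_eq0)/eqP; rewrite eq_le abs_le0 abs_ge0.
Qed.

Lemma chordalE u x : chordal abs u x = abs (wedge u x) / (supnorm u * supnorm x).
Proof. by []. Qed.

Lemma abs_wedge u x : abs (wedge u x) = chordal abs u x * (supnorm u * supnorm x).
Proof.
rewrite chordalE; have [e0|nux] := eqVneq (supnorm u * supnorm x) 0; last by rewrite divfK.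
rewrite e0 mulr0; move/eqP: e0; rewrite mulf_eq0 => /orP[]/eqP/supnorm_eq0->;
  by rewrite /wedge !mxE !(mul0r, mulr0) subr0 abs0.
Qed.

Lemma supnormZ c u : supnorm (c *: u) = abs c * supnorm u.
Proof. by rewrite /supnorm !mxE !absM // maxr_pMr // abs_ge0. Qed.

Lemma chordalZ c u x : c != 0 -> chordal abs (c *: u) x = chordal abs u x.
Proof.
move=> nc; have nac : abs c != 0 by rewrite gt_eqF // abs_gt0.
rewrite !chordalE supnormZ.
have -> : wedge (c *: u) x = c * wedge u x by rewrite /wedge !mxE; ring.
by rewrite absM // -[_ * supnorm u * _]mulrA invfM mulrACA divff // mul1r.
Qed.

Lemma chordal_ge0 u x : 0 <= chordal abs u x.
Proof. by rewrite chordalE divr_ge0 ?mulr_ge0 ?supnorm_ge0 ?abs_ge0. Qed.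

Definition chordal_cvg (v : nat -> 'cV[C]_2) x :=
  forall eps, 0 < eps -> eventually (fun n => chordal abs (v n) x < eps).

Lemma chordal_cvg_scale (c : nat -> C) u v x : (forall n, c n != 0) ->
  (forall n, v n = c n *: u n) -> chordal_cvg u x <-> chordal_cvg v x.
Proof. by move=> nc e; split=> h eps /h[N hN]; exists N => n /hN; rewrite e chordalZ. Qed.

Lemma chordal_cvg_subseq v x phi :
  {homo phi : m n / (m < n)%N} -> chordal_cvg v x -> chordal_cvg (fun n => v (phi n)) x.
Proof. by move=> hphi hv eps /hv; apply: eventually_subseq. Qed.

Lemma mxcvg_supnorm_bound v w :
  mxcvg v w -> eventually (fun n => supnorm (v n) <= Num.max 1 (supnorm w)).
Proof.
move=> hv; have [N hN] := eventually_all (fun i => hv i 0 _ ltr01).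
exists N => n /hN near_w; rewrite ge_max.
have le_i i : abs (v n i 0) <= Num.max 1 (supnorm w).
  rewrite -[v n i 0](subrK (w i 0)); apply: le_trans (absD_max _ _) _.
  rewrite ge_max le_max (ltW (near_w i)) /= le_max /supnorm orbC.
  by case: (ord2P i) => ->; rewrite le_max lexx ?orbT.
by rewrite !le_i.
Qed.

Lemma chordal_limit_wedge v w x : mxcvg v w -> chordal_cvg v x -> wedge w x = 0.
Proof.
move=> hv hx; apply: (cvg_unique (u := fun n => wedge (v n) x)).
  by apply: cvgB; apply: cvgM (hv _ _) (cvg_cst _).
move=> eps he; set B := Num.max 1 (supnorm w).
have hB : 1 <= B by rewrite le_max lexx.
have hX := supnorm_ge0 x.
have hD : 0 < B * supnorm x + 1 by nra.
have [N hN] := eventually_and (hx _ (divr_gt0 he hD)) (mxcvg_supnorm_bound hv).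
exists N => n /hN[]; rewrite ltr_pdivlMr // subr0 abs_wedge => small bound.
have := chordal_ge0 (v n) x; have : supnorm (v n) * supnorm x <= B * supnorm x.
  by rewrite ler_wpM2r.
nra.
Qed.

Lemma chordal_limit_scale v w x :
  mxcvg v w -> w != 0 -> chordal_cvg v x -> exists c, x = c *: w.
Proof. by move=> hv nw hx; apply: wedge_eq0_scale nw (chordal_limit_wedge hv hx). Qed.

Lemma in_P1_closed (K : C -> Prop) (v : nat -> 'cV[C]_2) x :
  embedded_local_field abs K -> (forall n, mx_over K (v n)) -> (forall n, v n != 0) ->
  chordal_cvg v x -> in_P1 K x.
Proof.
move=> hK Kv nv hx.
have [c [phi [L [hphi hc hL cvgL]]]] :=
  proj_subseq_cvg (J := unit) (fun=> hK) (fun n _ => Kv n) (fun n _ => nv n).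
have [KL nL] := hL tt.
have hLx : chordal_cvg (fun n => c (phi n) tt *: v (phi n)) x.
  apply/(chordal_cvg_scale (u := fun n => v (phi n))) => // [n|].
    by case: (hc (phi n) tt).
  exact: chordal_cvg_subseq.
have [a ->] := chordal_limit_scale (cvgL tt) nL hLx.
by exists (L tt); split=> //; split; [move=> i; apply: KL | exists a].
Qed.

Lemma kernel_limit_in_P1 (K : C -> Prop) (g : nat -> 'M[C]_2) (h : 'M[C]_2) y x i k :
  embedded_local_field abs K -> (forall n, mx_over K (g n) /\ \det (g n) != 0) ->
  mx_over K h -> h i k != 0 -> h *m y = 0 -> y != 0 ->
  chordal_cvg (fun n => g n *m y) x -> in_P1 K x.
Proof.
move=> hK hg Kh nhik hy0 ny hx; have [hKs _] := hK.
have [a ey] := mul_eq0_scale_kernel nhik hy0.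
have na : a != 0 by apply: contraNneq ny => a0; rewrite ey a0 scale0r.
set w := row_kernel_vector h i in ey.
have nw : w != 0 := row_kernel_vector_neq0 nhik.
have Kw : mx_over K w.
  by move=> a' b; rewrite mxE; case: ifP => _; [apply: (subfieldN hKs)|]; exact: Kh.
apply: (in_P1_closed (v := fun n => g n *m w)) => // [n|n|].
- exact: (mx_over_mul hKs (proj1 (hg n)) Kw).
- have ug : g n \in unitmx by rewrite unitmxE unitfE; case: (hg n).
  by apply: contraNneq nw => gw0; rewrite -(mulKmx ug w) gw0 mulmx0.
- have e n : g n *m y = a *: (g n *m w) by rewrite ey scalemxAr.
  exact: (chordal_cvg_scale (c := fun=> a) (u := fun n => g n *m w)
                            (v := fun n => g n *m y) x (fun=> na) e).2 hx.
Qed.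

Lemma image_limit_in_P1 (K : C -> Prop) (g : nat -> 'M[C]_2) (c : nat -> C) h y x (k : 'I_2) :
  (forall n, c n != 0) -> mxcvg (fun n => c n *: g n) h -> mx_over K h ->
  \det h = 0 -> col k h != 0 -> h *m y != 0 ->
  chordal_cvg (fun n => g n *m y) x -> in_P1 K x.
Proof.
move=> nc cvgh Kh dh nhk nhy hx.
have [b ehy] := singular_mul_col y dh nhk.
have [a ex] : exists a, x = a *: (h *m y).
  apply: chordal_limit_scale (mxcvg_mul cvgh (mxcvg_cst y)) nhy _.
  have e n : (c n *: g n) *m y = c n *: (g n *m y) by rewrite scalemxAl.
  exact: (chordal_cvg_scale (u := fun n => g n *m y) (v := fun n => (c n *: g n) *m y)
                            x nc e).1 hx.
exists (col k h); split=> //; split; first by move=> j; rewrite mxE.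
by exists (a * b); rewrite ex ehy scalerA.
Qed.

Lemma singular_limit_in_P1 (K : C -> Prop) (g : nat -> 'M[C]_2) (c : nat -> C) h y x :
  embedded_local_field abs K ->
  (forall n, mx_over K (g n) /\ \det (g n) != 0) -> (forall n, c n != 0) ->
  mxcvg (fun n => c n *: g n) h -> mx_over K h -> h != 0 -> \det h = 0 ->
  y != 0 -> chordal_cvg (fun n => g n *m y) x -> in_P1 K x.
Proof.
move=> hK hg nc cvgh Kh /matrix0Pn[i [k nhik]] dh ny hx.
have [hy0|nhy] := eqVneq (h *m y) 0; first exact: kernel_limit_in_P1 hK hg Kh nhik hy0 ny hx.
have nhk : col k h != 0 by apply/matrix0Pn; exists i, 0; rewrite mxE.
exact: image_limit_in_P1 nc cvgh Kh dh nhk nhy hx.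
Qed.

Lemma discrete_limit_singular (S : finType) (K : S -> C -> Prop) G
    (M : nat -> S -> 'M[C]_2) (h : S -> 'M[C]_2) :
  pgl_subgroup K G -> pgl_discrete abs G ->
  (forall n, G (M n)) -> (forall m n, m <> n -> ~ proj_eq (M m) (M n)) ->
  (forall s, mxcvg (fun n => M n s) (h s)) -> exists s, \det (h s) = 0.
Proof.
move=> [GK [_ [Gmul [Ginv _]]]] [eps [he disc]] GM distinct cvgM.
have [/existsP[s /eqP dh]|/existsPn ndh] := boolP [exists s, \det (h s) == 0].
  by exists s.
exfalso.
have uM n s : M n s \in unitmx by rewrite unitmxE unitfE; case: (GK _ (GM n) s).
(* M_n M_(n+1)^-1 -> h h^-1 = 1, so discreteness makes M_n, M_(n+1) projectively equal. *)
pose N n s := M n s *m invmx (M n.+1 s).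
have cvgN s : mxcvg (fun n => N n s) 1%:M.
  have uh : h s \in unitmx by rewrite unitmxE unitfE ndh.
  have cvgM1 : mxcvg (fun n => M n.+1 s) (h s).
    by apply: (mxcvg_subseq (phi := succn)) (cvgM s).
  rewrite -(mulmxV uh).
  exact: mxcvg_mul (cvgM s) (mxcvg_invmx (fun n => uM n.+1 s) uh cvgM1).
have [n0 near1] : eventually (fun n => forall s i j, abs (N n s i j - 1%:M i j) < eps).
  by do 3![apply: eventually_all => ?]; apply: cvgN.
have /disc/(_ (near1 n0 (leqnn n0))) N1 := Gmul _ _ (GM n0) (Ginv _ (GM n0.+1)).
apply: (distinct n0 n0.+1 (@n_Sn n0)) => s; have [d [nd e]] := N1 s.
exists d; split=> //.
by rewrite -(mulmxKV (uM n0.+1 s) (M n0 s)) [_ *m invmx _]e -scalemxAl mul1mx.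
Qed.

End Ultrametric.

Theorem lemma2p5 (p : nat) (R : realType) (C : closedFieldType) (abs : C -> R)
  (hC : is_C_field abs p)
  (S : finType) (hS : (0 < #|S|)%N)
  (K : S -> C -> Prop) (hK : forall s, embedded_local_field abs (K s))
  (G : (S -> 'M[C]_2) -> Prop) (hG : pgl_subgroup K G)
  (hdisc : pgl_discrete abs G)
  (x : S -> 'cV[C]_2) (hx : limit_point abs G x) :
  exists s : S, in_P1 (K s) (x s).
Proof.
have [_ [hAbs _]] := hC.
have [GK [_ [_ [_ Gscale]]]] := hG.
have [_ [y [gam [ny [Ggam [distinct gam_y_x]]]]]] := hx.
have Kgam n s : mx_over (K s) (gam n s) /\ \det (gam n s) != 0 := GK _ (Ggam n) s.
have ngam n s : gam n s != 0 by apply: contraNneq (Kgam n s).2 => ->; rewrite det0.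
have [c [phi [h [hphi hc hh cvgh]]]] :=
  proj_subseq_cvg hAbs hK (fun n s => (Kgam n s).1) ngam.
have nc n s : c n s != 0 by have [] := hc n s.
pose M n s := c (phi n) s *: gam (phi n) s.
have GM n : G (M n) by apply: Gscale => // s; apply: hc.
have distinctM m n : m <> n -> ~ proj_eq (M m) (M n).
  move=> mn eqM; apply: (distinct (phi m) (phi n)).
    by move/(incn_inj (leq_mono hphi)).
  exact: proj_eq_scale (nc (phi m)) (nc (phi n)) eqM.
have [s dh] := discrete_limit_singular hAbs hG hdisc GM distinctM cvgh.
exists s; have [Kh nh] := hh s.
apply: (singular_limit_in_P1 (g := fun n => gam (phi n) s) (c := fun n => c (phi n) s)
  hAbs (hK s) (fun n => Kgam (phi n) s) (fun n => nc (phi n) s) (cvgh s) Kh nh dh (ny s)).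
exact: chordal_cvg_subseq hphi (gam_y_x s).
Qed.
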